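(* Let $l=(l_1,\dots,l_m)$ be an admissible cut length vector for $f$ with distinguished index $i_0$ (as in conditions (ii),(iii) of admissibility), let $q$ be the order of $\sigma$, and let $l'=(l'_1,\dots,l'_m)$ be obtained from $l$ by a SC-folding of length $l^*$, where $0<l^*<l_{i_0}$ and $u_{i_0}(l_{i_0}-l^* )\in\mathcal{W}^{true}(l)$; that is, $l'_{i_0}=l_{i_0}-l^*$, $l'_{\sigma^{-p}(i_0)}=l_{\sigma^{-p}(i_0)}-\lambda^{-p}l^*$ for $p=1,\dots,q-1$, and $l'_j=l_j=0$ for $j$ not in the $\sigma$-orbit of $i_0$. Then $l'$ is admissible, and its total length satisfies $\sum_i l'_i=\sum_i l_i-\left(1+\frac1\lambda+\cdots+\frac{1}{\lambda^{q-1}}\right)l^*$.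
   Context: Let $S$ be a compact surface with marked points $X=\{x_0,\dots,x_n\}$ and $f:S\to S$ a pseudo-Anosov homeomorphism relative to $X$ with $f(x_0)=x_0$, $f(X)=X$, invariant stable and unstable transverse measured foliations $(\mathcal{F}^s,\mu^s)$, $(\mathcal{F}^u,\mu^u)$ (measures fixed) and dilatation $\lambda>1$: $f$ multiplies the $\mu^s$-length of arcs in leaves of $\mathcal{F}^u$ by $\lambda$. True singularities are the singular points of the foliations. Let $u_1,\dots,u_m$ be the unstable separatrices at $x_0$, cyclically indexed around $x_0$, with $f(u_i)=u_{\sigma(i)}$. Let $u_i(t)$ be the point of $u_i$ at $\mu^s$-length $t$ from $x_0$. For a nonzero cut length vector $l\in\mathbb{R}_+^m$, the cut line along $u_i$ is $[x_0,u_i(l_i)]\subset u_i$, $\mathcal{L}(l)$ is the union of cut lines, and $\mathcal{W}^{true}(l)$ is the union of the stable leaf segments emanating from the true singularities, each taken up to its first intersection with $\mathcal{L}(l)$. The vector $l$ is admissible if (i) there is a $\sigma$-orbit $\mathcal{O}$ with $l_i\neq0$ iff $i\in\mathcal{O}$, and there is $i_0\in\mathcal{O}$ (the distinguished index) with (ii) $l_{\sigma(i)}=\lambda l_i$ for all $i\neq i_0$ and (iii) $u_{i_0}(l_{i_0})\in\mathcal{W}^{true}(l)$. *)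

From HB Require Import structures.
From mathcomp Require Import all_boot all_order all_algebra all_fingroup.
Set Implicit Arguments. Unset Strict Implicit. Unset Printing Implicit Defensive.
Import Order.TTheory GRing.Theory Num.Theory.
Local Open Scope ring_scope.

Section Defs.
Variables (R : realFieldType) (S : Type) (m : nat).

Definition in_sorbit (sigma : {perm 'I_m}) (i j : 'I_m) : Prop :=
  exists n : nat, j = (sigma ^+ n)%g i.

(* x lies in the union L(l) of the cut lines [x0, u_i(l_i)] ; u i t is the
   point of the separatrix u_i at mu^s-length t from x0 *)
Definition in_cut_lines (u : 'I_m -> R -> S) (l : 'I_m -> R) (x : S) : Prop :=
  exists i t, 0 <= t <= l i /\ x = u i t.

(* W^true(l): gamma k is the k-th stable leaf ray emanating from a true
   singularity (gamma k 0 = the singularity); each ray is taken up to (and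
   including) its first intersection with L(l) after its starting point, or
   entirely if it never meets L(l). *)
Definition in_Wtrue (K : Type) (gamma : K -> R -> S) (u : 'I_m -> R -> S)
    (l : 'I_m -> R) (x : S) : Prop :=
  exists k t, 0 <= t /\
    (forall s, 0 < s < t -> ~ in_cut_lines u l (gamma k s)) /\
    x = gamma k t.

Definition admissible_with (K : Type) (gamma : K -> R -> S)
    (u : 'I_m -> R -> S) (sigma : {perm 'I_m}) (lam : R)
    (l : 'I_m -> R) (i0 : 'I_m) : Prop :=
  (forall i, 0 <= l i) /\ (exists i, l i != 0) /\
  (exists o, (forall j, l j != 0 <-> in_sorbit sigma o j) /\ in_sorbit sigma o i0) /\
  (forall i, i != i0 -> l (sigma i) = lam * l i) /\
  in_Wtrue gamma u l (u i0 (l i0)).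

Definition admissible (K : Type) (gamma : K -> R -> S)
    (u : 'I_m -> R -> S) (sigma : {perm 'I_m}) (lam : R) (l : 'I_m -> R) : Prop :=
  exists i0, admissible_with gamma u sigma lam l i0.

End Defs.

From HB Require Import structures.
From mathcomp Require Import all_boot all_order all_algebra all_fingroup.
From mathcomp Require Import zify.
Set Implicit Arguments. Unset Strict Implicit. Unset Printing Implicit Defensive.
Import Order.TTheory GRing.Theory Num.Theory.
Local Open Scope ring_scope.

(* Along the backward orbit i0, sigma^-1 i0, ... the recursion l (sigma i) =
   lam * l i forces l (sigma^-p i0) = lam^-p * l i0, and the folding subtracts
   exactly lam^-p times lstar, so l' is again lam-equivariant off i0 with the same
   support.  The folding only shortens cut lines, which can only lengthen the
   stable rays of W^true, so the new endpoint u_i0(l_i0 - lstar) stays in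
   W^true(l').  Summing the subtracted amounts over the q points of the orbit
   gives the length formula. *)

Lemma sum_supported_on_image (V : nmodType) (I J : finType) (a : I -> J)
    (F : J -> V) :
  injective a -> (forall j, j \notin [set a i | i : I] -> F j = 0) ->
  \sum_j F j = \sum_i F (a i).
Proof.
move=> inj_a F0; rewrite (bigID (mem [set a i | i : I])) /=.
rewrite [X in _ + X]big1 ?addr0; last by move=> j /F0.
by rewrite big_imset //= => x y _ _ /inj_a.
Qed.

Lemma porbit_expgVmin (T : finType) (s : {perm T}) x y :
  y \in porbit s x -> exists2 p, (p < #[s]%g)%N & y = (s ^- p)%g x.
Proof.
by rewrite -porbitV => /porbitPmin[p]; rewrite orderV expVgn => lt_p ->; exists p.
Qed.

Lemma mem_porbit_perm (T : finType) (s : {perm T}) x y :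
  (s x \in porbit s y) = (x \in porbit s y).
Proof. by rewrite porbit_sym (porbit_perm s 1) porbit_sym. Qed.

Section Orbits.
Variables (m : nat) (s : {perm 'I_m}).

Lemma in_sorbitP i j : reflect (in_sorbit s i j) (j \in porbit s i).
Proof. exact: porbitP. Qed.

Lemma in_sorbit_refl i : in_sorbit s i i.
Proof. by apply/in_sorbitP; apply: porbit_id. Qed.

Lemma in_sorbit_common i j k :
  in_sorbit s i j -> in_sorbit s i k -> in_sorbit s j k.
Proof.
move=> /in_sorbitP ij /in_sorbitP ik; apply/in_sorbitP.
by rewrite porbit_sym -eq_porbit_mem in ij; rewrite -(eqP ij).
Qed.

End Orbits.

Section CutLines.
Variables (R : realFieldType) (S : Type) (m : nat) (u : 'I_m -> R -> S).
Variables (l l' : 'I_m -> R).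
Hypothesis le_l'l : forall i, l' i <= l i.

Lemma in_cut_lines_le x : in_cut_lines u l' x -> in_cut_lines u l x.
Proof.
case=> i [t [/andP[t_ge0 t_le] ->]]; exists i, t; split=> //.
by rewrite t_ge0 (le_trans t_le).
Qed.

Lemma in_Wtrue_le (K : Type) (gamma : K -> R -> S) x :
  in_Wtrue gamma u l x -> in_Wtrue gamma u l' x.
Proof.
case=> k [t [t_ge0 [free ->]]]; exists k, t; split=> //; split=> //.
by move=> s s_in /in_cut_lines_le; apply: free.
Qed.

End CutLines.

Section Folding.
Variables (R : realFieldType) (m : nat) (sigma : {perm 'I_m}).
Variables (lam lstar : R) (l l' : 'I_m -> R) (i0 : 'I_m).

Local Notation q := #[sigma]%g.
Local Notation back p := ((sigma ^- p)%g i0).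

Hypotheses (lam_gt1 : 1 < lam) (lstar_gt0 : 0 < lstar) (lstar_lt : lstar < l i0).
Hypothesis l_ge0 : forall i, 0 <= l i.
Hypothesis l_rec : forall i, i != i0 -> l (sigma i) = lam * l i.
Hypothesis l_supp : forall j, l j != 0 -> j \in porbit sigma i0.
Hypothesis l'_i0 : l' i0 = l i0 - lstar.
Hypothesis l'_back : forall p, (1 <= p <= q - 1)%N ->
  l' (back p) = l (back p) - lam ^- p * lstar.
Hypothesis l'_out : forall j, j \notin porbit sigma i0 -> l' j = l j.

Lemma lam_gt0 : 0 < lam.
Proof. exact: lt_trans lam_gt1. Qed.

Lemma back0 : back 0 = i0.
Proof. by rewrite expg0 invg1 perm1. Qed.

Lemma sigma_backS p : sigma (back p.+1) = back p.
Proof. by rewrite expgS invgM permM permKV. Qed.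

Lemma fold_back p : (p < q)%N -> l' (back p) = l (back p) - lam ^- p * lstar.
Proof.
case: p => [|p] lt_pq; first by rewrite back0 l'_i0 expr0 invr1 mul1r.
by apply: l'_back; lia.
Qed.

(* Comparing the two prescribed values of l' at a point reached twice gives
   lam ^+ k = 1 with 0 < k < q, which is impossible since lam > 1. *)
Lemma back_inj p p' : (p < q)%N -> (p' < q)%N -> back p = back p' -> p = p'.
Proof.
wlog lt_pp' : p p' / (p < p')%N.
  move=> wlog_lt lt_pq lt_p'q eq_back.
  by case: (ltngtP p p') => [/wlog_lt|/wlog_lt|] // ->.
move=> _ lt_p'q eq_back; exfalso.
pose k := (p' - p)%N.
have back_k : back k = i0.
  apply: (@perm_inj _ (sigma ^- p)%g).
  by rewrite eq_back -permM -invgM -expgnDr subnKC // ltnW.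
have lt_kq : (k < q)%N by rewrite /k; lia.
have : lam ^- k * lstar = lstar.
  apply: oppr_inj; apply: (addrI (l i0)).
  by have := fold_back lt_kq; rewrite back_k l'_i0 => <-.
rewrite -[X in _ = X]mul1r => /(mulIf (lt0r_neq0 lstar_gt0)) /eqP.
rewrite invr_eq1 => /eqP lamk1.
by have := exprn_egt1 k lam_gt1; rewrite lamk1 ltxx /k; lia.
Qed.

Lemma l_back p : (p < q)%N -> l (back p) = lam ^- p * l i0.
Proof.
elim: p => [|p IHp] lt_pq; first by rewrite back0 expr0 invr1 mul1r.
have ne_back : back p.+1 != i0.
  by apply/eqP; rewrite -{2}back0 => /(back_inj lt_pq (order_gt0 _)).
have := l_rec ne_back; rewrite sigma_backS IHp ?(ltnW lt_pq) // => rec.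
by rewrite exprS invfM -mulrA rec mulKf // gt_eqF ?lam_gt0.
Qed.

Lemma l'_backE p : (p < q)%N -> l' (back p) = lam ^- p * (l i0 - lstar).
Proof. by move=> lt_pq; rewrite fold_back // l_back // mulrBr. Qed.

Lemma lamVX_gt0 p : 0 < lam ^- p.
Proof. by rewrite invr_gt0 exprn_gt0 ?lam_gt0. Qed.

Lemma l'_back_gt0 p : (p < q)%N -> 0 < l' (back p).
Proof. by move=> lt_pq; rewrite l'_backE // mulr_gt0 ?subr_gt0 ?lamVX_gt0. Qed.

Lemma l'_le_l i : l' i <= l i.
Proof.
have [/porbit_expgVmin[p lt_pq ->]|/l'_out -> //] := boolP (i \in porbit sigma i0).
by rewrite fold_back // gerBl ltW // mulr_gt0 ?lamVX_gt0.
Qed.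

Lemma l'_ge0 i : 0 <= l' i.
Proof.
have [/porbit_expgVmin[p lt_pq ->]|/l'_out -> //] := boolP (i \in porbit sigma i0).
exact/ltW/l'_back_gt0.
Qed.

Lemma l'_neq0 j : (l' j != 0) = (j \in porbit sigma i0).
Proof.
have [/porbit_expgVmin[p lt_pq ->]|out] := boolP (j \in porbit sigma i0).
  by rewrite gt_eqF ?l'_back_gt0.
by rewrite l'_out //; apply: contraNF out => /l_supp.
Qed.

Lemma l'_rec i : i != i0 -> l' (sigma i) = lam * l' i.
Proof.
move=> ne_i_i0; have [|out] := boolP (i \in porbit sigma i0); last first.
  by rewrite !l'_out ?mem_porbit_perm ?l_rec.
case/porbit_expgVmin=> [[|p] lt_pq def_i]; first by rewrite def_i back0 eqxx in ne_i_i0.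
rewrite def_i sigma_backS !l'_backE ?(ltnW lt_pq) //.
by rewrite exprS invfM !mulrA mulfV ?mul1r // gt_eqF ?lam_gt0.
Qed.

Lemma sum_fold : \sum_i l' i = \sum_i l i - (\sum_(p < q) lam ^- p) * lstar.
Proof.
rewrite mulr_suml.
have <- : \sum_i (l i - l' i) = \sum_(p < q) lam ^- p * lstar.
  rewrite (@sum_supported_on_image _ _ _ (fun p : 'I_q => back p)).
  - by apply: eq_bigr => p _; rewrite fold_back // opprB addrC subrK.
  - by move=> [p lt_pq] [p' lt_p'q] /(back_inj lt_pq lt_p'q) eq_pp'; apply: val_inj.
  move=> j out; rewrite l'_out ?subrr //; apply: contra out.
  by case/porbit_expgVmin=> p lt_pq ->; apply/imsetP; exists (Ordinal lt_pq).
by rewrite sumrB opprB addrC subrK.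
Qed.

Lemma admissible_fold (S K : Type) (u : 'I_m -> R -> S) (gamma : K -> R -> S) :
  in_Wtrue gamma u l (u i0 (l i0 - lstar)) ->
  admissible_with gamma u sigma lam l' i0.
Proof.
move=> W_end; split; [|split; [|split; [|split]]].
- exact: l'_ge0.
- by exists i0; rewrite l'_neq0 porbit_id.
- exists i0; split=> [j|]; last exact: in_sorbit_refl.
  by rewrite l'_neq0; split=> /in_sorbitP.
- exact: l'_rec.
- by rewrite l'_i0; apply: in_Wtrue_le W_end; apply: l'_le_l.
Qed.

End Folding.

Theorem proposition4p2 (R : realFieldType) (S : Type) (f : S -> S) (x0 : S)
  (m : nat) (sigma : {perm 'I_m}) (lam : R) (u : 'I_m -> R -> S)
  (K : finType) (gamma : K -> R -> S) (tau : K -> K)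
  (* standing structure *)
  (hlam : 1 < lam)
  (hf : bijective f) (hfx0 : f x0 = x0)
  (hu0 : forall i, u i 0 = x0)
  (hfu : forall i t, 0 <= t -> f (u i t) = u (sigma i) (lam * t))
  (hfg : forall k t, 0 <= t -> f (gamma k t) = gamma (tau k) (t / lam))
  (hrot : exists r : nat, forall i : 'I_m, val (sigma i) = ((val i + r) %% m)%N)
  (* the data of the proposition *)
  (l l' : 'I_m -> R) (i0 : 'I_m) (lstar : R)
  (hadm : admissible_with gamma u sigma lam l i0)
  (hl0 : 0 < lstar) (hl1 : lstar < l i0)
  (hW : in_Wtrue gamma u l (u i0 (l i0 - lstar)))
  (h'i0 : l' i0 = l i0 - lstar)
  (h'p : forall p : nat, (1 <= p <= #[sigma]%g - 1)%N ->
           l' ((sigma ^- p)%g i0) = l ((sigma ^- p)%g i0) - lam ^- p * lstar)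
  (h'o : forall j, ~ in_sorbit sigma i0 j -> l' j = l j) :
  admissible gamma u sigma lam l' /\
  \sum_i l' i = \sum_i l i - (\sum_(p < #[sigma]%g) lam ^- p) * lstar.
Proof.
case: hadm => [l_ge0 [_ [[o [l_supp o_i0]] [l_rec _]]]].
have l_supp_orbit j : l j != 0 -> j \in porbit sigma i0.
  by move/l_supp/(in_sorbit_common o_i0)/in_sorbitP.
have l'_out j : j \notin porbit sigma i0 -> l' j = l j.
  by move/in_sorbitP; apply: h'o.
split; first by exists i0; apply: admissible_fold hW.
exact: sum_fold hlam hl0 hl1 h'i0 h'p l'_out.
Qed.
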